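(* There exist positive constants $c_1,c_2,c_3$, independent of $n$ and $t$, such that for all sufficiently large $n$, \[ \frac{1}{y_1(t)}\le \begin{cases} c_1\,n^{1-\beta}, & 0\le t\le 1,\\[2pt] c_2+c_3\,n^{\min\{1-\beta,\alpha\}}e^{-\lambda_1 t}, & t>1. \end{cases} \]
   Context: Fix constants $r_0,d_0\ge 0$ with $\lambda_0:=r_0-d_0<0$, $d_1>0$, $k>1$, $\alpha\in(0,1)$, $\beta\in(0,1)$. Let $f:[0,\infty)^2\to[0,\infty)$ satisfy: (A1) $f$ is Lipschitz continuous; (A2) $f(x,y)=r_1$ when $x+y=0$ and $f(x,y)=d_1$ when $x+y=1$, where $r_1:=f(0,0)>d_1$; (A3) $f(x,y)=\Phi(x+y)$ for some non-increasing function $\Phi:[0,\infty)\to[0,\infty)$; (A4) $f(x,y)\to0$ as $x\to\infty$ and as $y\to\infty$; (A5) $f(x,y)\ge \lambda_1(1-(x+y))+d_1$ for all $x,y\ge0$, where $\lambda_1:=r_1-d_1>0$. Put $\phi(x,y):=f(x,y)-d_1$. For each integer $n\ge1$ let $K=K(n):=kn$ and let $(y_0,y_1,y_\beta)$ solve \[ \dot y_0=\lambda_0 y_0,\qquad \dot y_1=\phi(y_0,y_1)\,y_1+n^{-\alpha}y_0,\qquad \dot y_\beta=\phi(y_0,y_1)\,y_\beta, \] with $(y_0(0),y_1(0),y_\beta(0))=(n/K,\,n^\beta/K,\,n^\beta/K)$. *)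

From Stdlib Require Import Reals.
From Coquelicot Require Import Coquelicot.
Open Scope R_scope.

(* Standing assumptions (A1)-(A5) on f : [0,oo)^2 -> [0,oo),
   with r1 := f 0 0 and lambda1 := r1 - d1. *)
Definition f_assumptions (f : R -> R -> R) (d1 : R) : Prop :=
  (forall x y, 0 <= x -> 0 <= y -> 0 <= f x y) /\
  (exists L, 0 <= L /\ forall x y x' y', 0 <= x -> 0 <= y -> 0 <= x' -> 0 <= y' ->
     Rabs (f x y - f x' y') <= L * (Rabs (x - x') + Rabs (y - y'))) /\
  (forall x y, 0 <= x -> 0 <= y -> x + y = 0 -> f x y = f 0 0) /\
  (forall x y, 0 <= x -> 0 <= y -> x + y = 1 -> f x y = d1) /\
  f 0 0 > d1 /\
  (exists Phi : R -> R,
     (forall s, 0 <= s -> 0 <= Phi s) /\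
     (forall s s', 0 <= s -> s <= s' -> Phi s' <= Phi s) /\
     (forall x y, 0 <= x -> 0 <= y -> f x y = Phi (x + y))) /\
  (forall y, 0 <= y -> is_lim (fun x => f x y) p_infty 0) /\
  (forall x, 0 <= x -> is_lim (fun y => f x y) p_infty 0) /\
  (forall x y, 0 <= x -> 0 <= y -> f x y >= (f 0 0 - d1) * (1 - (x + y)) + d1).

Definition is_solution (f : R -> R -> R) (lam0 d1 k alpha beta : R) (n : nat)
    (y0 y1 yb : R -> R) : Prop :=
  let nR := INR n in
  let K := k * nR in
  let phi := fun x y => f x y - d1 in
  y0 0 = nR / K /\ y1 0 = Rpower nR beta / K /\ yb 0 = Rpower nR beta / K /\
  filterlim y0 (at_right 0) (locally (y0 0)) /\
  filterlim y1 (at_right 0) (locally (y1 0)) /\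
  filterlim yb (at_right 0) (locally (yb 0)) /\
  (forall t, 0 < t ->
     is_derive y0 t (lam0 * y0 t) /\
     is_derive y1 t (phi (y0 t) (y1 t) * y1 t + Rpower nR (- alpha) * y0 t) /\
     is_derive yb t (phi (y0 t) (y1 t) * yb t)).

(* The class [y0] is explicit, [y0 t = exp (lambda0 t) / k].  Since [f >= 0], the function
   [exp ((d1 - lambda0) t) y1 t - (n^-alpha / k) t] is nondecreasing as long as it is positive;
   this bounds [y1] below on [0, 1] by its initial value [n^(beta - 1) / k], and at [t = 1] by
   [(n^(beta - 1) + n^-alpha) / k].  For [t >= 1], (A5) makes [y1] a supersolution of the
   logistic equation [y' = lambda1 (1 - y0 - y) y], so [u = 1 / y1] satisfies the linear
   inequality [u' <= lambda1 - lambda1 (1 - y0) u].  As [y0] has total mass at most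
   [1 / (k |lambda0|)] on [1, oo), the integrating factor of this inequality stays within a
   constant of [exp (lambda1 t)], whence [u t <= C (1 + exp (- lambda1 (t - 1)) u 1)]. *)

From Stdlib Require Import Reals Lra Lia Classical.
From Coquelicot Require Import Coquelicot.
Open Scope R_scope.

Lemma exp_le_exp (x y : R) : x <= y -> exp x <= exp y.
Proof. intros [Hlt | ->]; [left; apply exp_increasing, Hlt | right; reflexivity]. Qed.

Lemma Rinv_le_of_le_mul (u c v : R) : 0 < u -> 0 < c -> u <= c * v -> / v <= c / u.
Proof.
intros Hu Hc Huv. assert (Hv : 0 < v) by nra.
replace (/ v) with (c * / (c * v)) by (field; lra).
apply Rmult_le_compat_l; [lra | apply Rinv_le_contravar; assumption].
Qed.

Lemma inv_initial_plus_source_le (x k p q : R) : 0 < k ->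
  / (/ k * / Rpower x p + Rpower x (- q) / k) <= k * Rpower x (Rmin p q).
Proof.
intros Hk.
assert (Hp : 0 < Rpower x p) by apply exp_pos. assert (Hq : 0 < Rpower x q) by apply exp_pos.
assert (Hinv : forall u v, 0 < u -> 0 < v -> / (/ k * / u + / k * / v) <= k * u).
{ intros u v Hu Hv. rewrite <- !Rinv_mult.
  pose proof (Rinv_0_lt_compat (k * u) ltac:(nra)). pose proof (Rinv_0_lt_compat (k * v) ltac:(nra)).
  apply Rle_trans with (/ / (k * u)); [apply Rinv_le_contravar; lra | rewrite Rinv_inv; lra]. }
rewrite Rpower_Ropp. unfold Rdiv. rewrite (Rmult_comm (/ Rpower x q)).
unfold Rmin. destruct (Rle_dec p q).
- apply Hinv; assumption.
- rewrite Rplus_comm. apply Hinv; assumption.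
Qed.

Lemma Rpower_div_mul_self (x b k : R) : 0 < x -> 0 < k ->
  Rpower x b / (k * x) = / k * / Rpower x (1 - b).
Proof.
intros Hx Hk. unfold Rminus. rewrite Rpower_plus, Rpower_1, Rpower_Ropp by exact Hx.
field. assert (0 < Rpower x b) by apply exp_pos. split; lra.
Qed.

Lemma is_derive_continuous (g : R -> R) (x l : R) : is_derive g x l -> continuous g x.
Proof. intros Hg. apply (@ex_derive_continuous R_AbsRing R_NormedModule). exists l; exact Hg. Qed.

Lemma is_derive_ball (g : R -> R) (x l eps : R) : is_derive g x l -> 0 < eps ->
  exists d, 0 < d /\ forall s, Rabs (s - x) < d -> Rabs (g s - g x) < eps.
Proof.
intros Hg Heps. apply is_derive_continuous in Hg.
unfold continuous in Hg. rewrite filterlim_locally in Hg.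
destruct (Hg (mkposreal eps Heps)) as [d Hd].
exists d. split; [apply cond_pos | intros s Hs; exact (Hd s Hs)].
Qed.

Lemma filterlim_at_right_ball (g : R -> R) (a c eps : R) :
  filterlim g (at_right a) (locally c) -> 0 < eps ->
  exists d, 0 < d /\ forall s, a < s < a + d -> Rabs (g s - c) < eps.
Proof.
intros Hg Heps. rewrite filterlim_locally in Hg.
destruct (Hg (mkposreal eps Heps)) as [d Hd].
exists d. split; [apply cond_pos |].
intros s Hs. apply (Hd s); [| lra]. change (Rabs (s - a) < d). rewrite Rabs_right; lra.
Qed.

Lemma filterlim_at_right_affine (e h y : R -> R) (a c : R) :
  continuous e a -> continuous h a -> filterlim y (at_right a) (locally c) ->
  filterlim (fun s => e s * y s + h s) (at_right a) (locally (e a * c + h a)).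
Proof.
intros He Hh Hy.
assert (He' : filterlim e (at_right a) (locally (e a))).
{ eapply filterlim_filter_le_1; [apply filter_le_within | exact He]. }
assert (Hh' : filterlim h (at_right a) (locally (h a))).
{ eapply filterlim_filter_le_1; [apply filter_le_within | exact Hh]. }
apply (filterlim_comp_2 (G := locally (e a * c)) (H := locally (h a))
         (fun s => e s * y s) h Rplus).
- apply (filterlim_comp_2 (G := locally (e a)) (H := locally c) e y Rmult);
    [exact He' | exact Hy | apply (@filterlim_mult R_AbsRing)].
- exact Hh'.
- apply (@filterlim_plus R_AbsRing R_NormedModule).
Qed.

Lemma le_of_derive_nonneg (g dg : R -> R) (p q : R) : p <= q ->
  (forall s, p <= s <= q -> is_derive g s (dg s)) ->
  (forall s, p < s < q -> 0 <= dg s) -> g p <= g q.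
Proof.
intros Hpq Hder Hpos.
destruct (Req_dec p q) as [<- | Hne]; [lra |].
destruct (MVT_cor2 g dg p q) as [xi [Hmvt Hxi]]; [lra | |].
- intros s Hs. apply is_derive_Reals, Hder, Hs.
- assert (0 <= dg xi * (q - p)) by (apply Rmult_le_pos; [apply Hpos, Hxi | lra]). lra.
Qed.

Lemma le_of_right_limit_derive_nonneg (g dg : R -> R) (a c q : R) : a < q ->
  (forall s, a < s <= q -> is_derive g s (dg s)) ->
  (forall s, a < s < q -> 0 <= dg s) ->
  filterlim g (at_right a) (locally c) -> c <= g q.
Proof.
intros Haq Hder Hpos Hlim. apply Rnot_lt_le. intros Hlt.
destruct (filterlim_at_right_ball g a c (c - g q) Hlim) as [d [Hd Hnear]]; [lra |].
set (s := a + Rmin d (q - a) / 2).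
assert (Hs : a < s < q /\ s < a + d).
{ unfold s. assert (0 < Rmin d (q - a)) by (apply Rmin_glb_lt; lra).
  pose proof (Rmin_l d (q - a)). pose proof (Rmin_r d (q - a)). lra. }
assert (Hsq : g s <= g q).
{ apply (le_of_derive_nonneg g dg); [lra | intros u Hu; apply Hder; lra | intros u Hu; apply Hpos; lra]. }
pose proof (Hnear s ltac:(lra)) as Hgs. apply Rabs_def2 in Hgs. lra.
Qed.

Lemma le_of_right_limit_derive_nonneg_where_pos (g dg : R -> R) (a c : R) : 0 < c ->
  (forall s, a < s -> is_derive g s (dg s)) ->
  (forall s, a < s -> 0 < g s -> 0 <= dg s) ->
  filterlim g (at_right a) (locally c) -> forall t, a < t -> c <= g t.
Proof.
intros Hc Hder Hpos Hlim t Ht.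
(* [m := sup E] is the first time [g] could vanish; up to [m] the previous lemma applies,
   so [g m >= c > 0] and continuity pushes the positivity past [m] unless [m = t]. *)
set (E := fun s => a < s <= t /\ forall u, a < u <= s -> 0 < g u).
destruct (filterlim_at_right_ball g a c c Hlim Hc) as [d [Hd Hnear]].
assert (HE0 : E (a + Rmin d (t - a) / 2)).
{ assert (0 < Rmin d (t - a)) by (apply Rmin_glb_lt; lra).
  pose proof (Rmin_l d (t - a)). pose proof (Rmin_r d (t - a)).
  split; [lra |]. intros u Hu. pose proof (Hnear u ltac:(lra)) as Hgu. apply Rabs_def2 in Hgu. lra. }
destruct (completeness E) as [m [Hub Hlub]];
  [exists t; intros s Hs; apply Hs | exists (a + Rmin d (t - a) / 2); exact HE0 |].
assert (Ham : a < m).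
{ pose proof (Hub _ HE0). assert (0 < Rmin d (t - a)) by (apply Rmin_glb_lt; lra). lra. }
assert (Hmt : m <= t) by (apply Hlub; intros s Hs; apply Hs).
assert (Hbelow : forall u, a < u < m -> 0 < g u).
{ intros u Hu. destruct (classic (exists s, E s /\ u < s)) as [[s [Hs Hus]] | Hno].
  - apply Hs. lra.
  - exfalso. assert (m <= u); [| lra].
    apply Hlub. intros s Hs. apply Rnot_lt_le. intros Hus. apply Hno. exists s; auto. }
assert (Hgm : c <= g m).
{ apply (le_of_right_limit_derive_nonneg g dg a c m); auto.
  - intros s Hs; apply Hder; lra.
  - intros s Hs; apply Hpos, Hbelow; lra. }
destruct (Req_dec m t) as [<- | Hne]; [exact Hgm |].
exfalso.
destruct (is_derive_ball g m (dg m) (g m) (Hder m Ham)) as [d' [Hd' Hcont]]; [lra |].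
set (m' := m + Rmin d' (t - m) / 2).
assert (Hm' : m < m' <= t /\ m' < m + d').
{ unfold m'. assert (0 < Rmin d' (t - m)) by (apply Rmin_glb_lt; lra).
  pose proof (Rmin_l d' (t - m)). pose proof (Rmin_r d' (t - m)). lra. }
assert (HEm' : E m').
{ split; [lra |]. intros u Hu. destruct (Rlt_le_dec u m) as [Hum | Hum]; [apply Hbelow; lra |].
  pose proof (Hcont u ltac:(rewrite Rabs_right; lra)) as Hgu. apply Rabs_def2 in Hgu. lra. }
pose proof (Hub _ HEm'). lra.
Qed.

Lemma linear_ode_solution_at_right (y : R -> R) (l c : R) :
  (forall s, 0 < s -> is_derive y s (l * y s)) ->
  filterlim y (at_right 0) (locally c) -> forall t, 0 < t -> y t = c * exp (l * t).
Proof.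
intros Hder Hlim t Ht.
(* With [sgn = 1] and [sgn = -1]: [exp (- l s) * y s] is constant, equal to its limit [c]. *)
assert (Hbound : forall sgn, sgn * c <= sgn * exp (- l * t) * y t + 0).
{ intros sgn. set (e := fun s => sgn * exp (- l * s)).
  assert (He : forall s, is_derive e s (sgn * (- l * exp (- l * s)))).
  { intros s. unfold e. auto_derive; [exact I | ring]. }
  replace (sgn * c) with (e 0 * c + 0) by (unfold e; rewrite Rmult_0_r, exp_0; ring).
  apply (le_of_right_limit_derive_nonneg (fun s => e s * y s + 0) (fun _ => 0) 0 _ t); auto.
  - intros s Hs. apply (is_derive_ext (fun s => e s * y s)); [intros u; rewrite Rplus_0_r; reflexivity |].
    replace 0 with (sgn * (- l * exp (- l * s)) * y s + e s * (l * y s)) by (unfold e; ring).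
    apply (@is_derive_mult R_AbsRing); [apply He | apply Hder; lra | intros; apply Rmult_comm].
  - intros; lra.
  - apply filterlim_at_right_affine;
      [apply (is_derive_continuous _ _ _ (He 0)) | apply continuous_const | exact Hlim]. }
pose proof (Hbound 1) as H1. pose proof (Hbound (-1)) as H2.
assert (Hexp : exp (- l * t) * exp (l * t) = 1)
  by (rewrite <- exp_plus; replace (- l * t + l * t) with 0 by ring; apply exp_0).
assert (Hy : exp (- l * t) * y t = c) by lra.
rewrite <- Hy, Rmult_comm, <- Rmult_assoc, (Rmult_comm (exp (l * t))), Hexp. ring.
Qed.

Lemma weighted_inv_le_of_logistic_supersolution (y dy z P : R -> R) (l : R) : 0 < l ->
  (forall s, 1 <= s -> is_derive y s (dy s)) ->
  (forall s, 1 <= s -> is_derive P s (z s)) ->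
  (forall s, 1 <= s -> 0 < y s) ->
  (forall s, 1 <= s -> l * (1 - z s - y s) * y s <= dy s) ->
  P 1 = 0 -> (forall s, 1 <= s -> 0 <= P s) ->
  forall t, 1 <= t -> exp (l * (t - 1 - P t)) / y t <= exp (l * (t - 1)) + / y 1.
Proof.
intros Hl Hy HP Hpos Hsuper HP1 HP0 t Ht.
(* [E] integrates the linear part [l (1 - z)] of the inequality satisfied by [1 / y]. *)
set (E := fun s => exp (l * (s - 1 - P s))).
set (g := fun s => exp (l * (s - 1)) - E s / y s).
set (dg := fun s => l * exp (l * (s - 1)) - (E s * (l * (1 - z s)) * y s - E s * dy s) / y s ^ 2).
assert (Hg : forall s, 1 <= s -> is_derive g s (dg s)).
{ intros s Hs.
  assert (HE : is_derive E s (E s * (l * (1 - z s)))).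
  { rewrite Rmult_comm. apply (is_derive_comp exp (fun s => l * (s - 1 - P s))); [apply is_derive_exp |].
    apply is_derive_scal, (@is_derive_minus R_AbsRing R_NormedModule (fun s => s - 1) P).
    + auto_derive; [exact I | reflexivity].
    + apply HP, Hs. }
  apply (@is_derive_minus R_AbsRing R_NormedModule (fun s => exp (l * (s - 1))) (fun s => E s / y s)).
  - auto_derive; [exact I | unfold Rminus; ring].
  - apply is_derive_div; [exact HE | apply Hy, Hs | apply Rgt_not_eq, Hpos, Hs]. }
(* [dg] splits into two nonnegative parts: the supersolution defect and [exp (l (s - 1)) - E s]. *)
assert (Hdg : forall s, 1 <= s -> 0 <= dg s).
{ intros s Hs. pose proof (Hpos s Hs). pose proof (Hsuper s Hs). pose proof (exp_pos (l * (s - 1 - P s))).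
  assert (E s <= exp (l * (s - 1))) by (apply exp_le_exp; pose proof (HP0 s Hs); nra).
  replace (dg s) with (l * (exp (l * (s - 1)) - E s)
                       + E s / y s ^ 2 * (dy s - l * (1 - z s - y s) * y s))
    by (unfold dg, E; field; lra).
  apply Rplus_le_le_0_compat; apply Rmult_le_pos; try lra.
  apply Rdiv_le_0_compat; [unfold E; lra | apply pow_lt; lra]. }
assert (Hmono : g 1 <= g t).
{ apply (le_of_derive_nonneg g dg); [exact Ht | intros s Hs; apply Hg; lra | intros s Hs; apply Hdg; lra]. }
unfold g, E in Hmono. rewrite HP1 in Hmono.
replace (l * (1 - 1 - 0)) with 0 in Hmono by ring. replace (l * (1 - 1)) with 0 in Hmono by ring.
rewrite exp_0 in Hmono. pose proof (Hpos 1 (Rle_refl 1)).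
assert (0 < / y 1) by (apply Rinv_0_lt_compat; lra). unfold Rdiv in *. lra.
Qed.

Lemma inv_le_of_logistic_supersolution (y dy z P : R -> R) (l M : R) : 0 < l ->
  (forall s, 1 <= s -> is_derive y s (dy s)) ->
  (forall s, 1 <= s -> is_derive P s (z s)) ->
  (forall s, 1 <= s -> 0 < y s) ->
  (forall s, 1 <= s -> l * (1 - z s - y s) * y s <= dy s) ->
  P 1 = 0 -> (forall s, 1 <= s -> 0 <= P s <= M) ->
  forall t, 1 <= t -> / y t <= exp (l * M) * (1 + exp (- l * (t - 1)) / y 1).
Proof.
intros Hl Hy HP Hpos Hsuper HP1 HPb t Ht.
set (E := exp (l * (t - 1 - P t))).
assert (Hquot : E / y t <= exp (l * (t - 1)) + / y 1).
{ apply (weighted_inv_le_of_logistic_supersolution y dy z P); auto. intros s Hs; apply HPb, Hs. }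
assert (HinvE : / E <= exp (- l * (t - 1)) * exp (l * M)).
{ unfold E. rewrite <- exp_Ropp, <- exp_plus. apply exp_le_exp. pose proof (HPb t Ht). nra. }
assert (Hexp : exp (l * (t - 1)) * exp (- l * (t - 1)) = 1)
  by (rewrite <- exp_plus; replace (l * (t - 1) + - l * (t - 1)) with 0 by ring; apply exp_0).
pose proof (Hpos t Ht). assert (HE : 0 < E) by apply exp_pos.
assert (0 <= E / y t) by (apply Rdiv_le_0_compat; lra).
replace (/ y t) with (E / y t * / E) by (field; lra).
apply Rle_trans with ((exp (l * (t - 1)) + / y 1) * (exp (- l * (t - 1)) * exp (l * M))).
- apply Rmult_le_compat; [lra | left; apply Rinv_0_lt_compat, HE | exact Hquot | exact HinvE].
- right. unfold Rdiv.
  replace ((exp (l * (t - 1)) + / y 1) * (exp (- l * (t - 1)) * exp (l * M)))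
    with ((exp (l * (t - 1)) * exp (- l * (t - 1)) + exp (- l * (t - 1)) * / y 1) * exp (l * M))
    by ring.
  rewrite Hexp. ring.
Qed.

Section LogisticSolution.

Variables (f : R -> R -> R) (d1 l0 k a : R) (y0 y1 : R -> R).
Hypothesis f_nonneg : forall x y, 0 <= x -> 0 <= y -> 0 <= f x y.
Hypothesis d1_ge0 : 0 <= d1.
Hypothesis l0_lt0 : l0 < 0.
Hypothesis k_gt0 : 0 < k.
Hypothesis a_ge0 : 0 <= a.
Hypothesis y0_eq : forall t, 0 < t -> y0 t = / k * exp (l0 * t).
Hypothesis y0_derive : forall t, 0 < t -> is_derive y0 t (l0 * y0 t).
Hypothesis y1_0_gt0 : 0 < y1 0.
Hypothesis y1_right_lim : filterlim y1 (at_right 0) (locally (y1 0)).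
Hypothesis y1_derive :
  forall t, 0 < t -> is_derive y1 t ((f (y0 t) (y1 t) - d1) * y1 t + a * y0 t).

Lemma y0_nonneg (t : R) : 0 < t -> 0 <= y0 t.
Proof.
intros Ht. rewrite y0_eq by exact Ht.
apply Rmult_le_pos; [left; apply Rinv_0_lt_compat, k_gt0 | left; apply exp_pos].
Qed.

(* The weight [exp ((d1 - l0) t)] absorbs both the death rate [d1] and the decay of [y0],
   so the source term [a y0] contributes at least [a / k] to the growth rate. *)
Lemma y1_lower_bound (t : R) : 0 <= t -> y1 0 + a / k * t <= exp ((d1 - l0) * t) * y1 t.
Proof.
intros [Ht | <-]; [| rewrite !Rmult_0_r, exp_0; lra].
set (mu := d1 - l0).
set (g := fun s => exp (mu * s) * y1 s + - (a / k) * s).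
set (dg := fun s => mu * exp (mu * s) * y1 s
                    + exp (mu * s) * ((f (y0 s) (y1 s) - d1) * y1 s + a * y0 s) - a / k).
assert (Hak : 0 <= a / k) by (apply Rdiv_le_0_compat; lra).
assert (Hg : y1 0 <= g t).
{ apply (le_of_right_limit_derive_nonneg_where_pos g dg 0); [exact y1_0_gt0 | | | | exact Ht].
  - intros s Hs. unfold g, dg.
    apply (@is_derive_plus R_AbsRing R_NormedModule
             (fun s => exp (mu * s) * y1 s) (fun s => - (a / k) * s)).
    + apply (@is_derive_mult R_AbsRing (fun s => exp (mu * s)) y1);
        [| apply y1_derive, Hs | intros; apply Rmult_comm].
      auto_derive; [exact I | ring].
    + auto_derive; [exact I | ring].
  - intros s Hs Hgs. unfold g in Hgs.
    assert (Hy1 : 0 < y1 s).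
    { pose proof (exp_pos (mu * s)). assert (0 <= a / k * s) by (apply Rmult_le_pos; lra).
      destruct (Rle_lt_dec (y1 s) 0); [nra | assumption]. }
    assert (Hy0 := y0_eq s Hs).
    assert (Hf := f_nonneg (y0 s) (y1 s) (y0_nonneg s Hs) (Rlt_le _ _ Hy1)).
    assert (Hexp : exp (mu * s) * exp (l0 * s) = exp (d1 * s))
      by (rewrite <- exp_plus; f_equal; unfold mu; ring).
    assert (1 <= exp (d1 * s)) by (rewrite <- exp_0; apply exp_le_exp; nra).
    assert (Hemu := exp_pos (mu * s)).
    replace (dg s) with (exp (mu * s) * ((f (y0 s) (y1 s) - l0) * y1 s) + a / k * (exp (d1 * s) - 1))
      by (unfold dg; rewrite Hy0, <- Hexp; unfold mu; field; lra).
    apply Rplus_le_le_0_compat; apply Rmult_le_pos; nra.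
  - replace (y1 0) with (exp (mu * 0) * y1 0 + - (a / k) * 0) by (rewrite Rmult_0_r, exp_0; ring).
    apply (filterlim_at_right_affine (fun s => exp (mu * s)) (fun s => - (a / k) * s));
      [| | exact y1_right_lim].
    + apply (is_derive_continuous _ _ (mu * exp (mu * 0))). auto_derive; [exact I | ring].
    + apply (is_derive_continuous _ _ (- (a / k))). auto_derive; [exact I | ring]. }
unfold g in Hg. lra.
Qed.

Lemma y1_pos (t : R) : 0 <= t -> 0 < y1 t.
Proof.
intros Ht. pose proof (y1_lower_bound t Ht). pose proof (exp_pos ((d1 - l0) * t)).
assert (0 <= a / k * t) by (apply Rmult_le_pos; [apply Rdiv_le_0_compat |]; lra).
nra.
Qed.

Lemma inv_y1_le_on_unit_interval (t : R) : 0 <= t <= 1 -> / y1 t <= exp (d1 - l0) / y1 0.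
Proof.
intros Ht. apply Rinv_le_of_le_mul; [exact y1_0_gt0 | apply exp_pos |].
pose proof (y1_lower_bound t (proj1 Ht)). pose proof (y1_pos t (proj1 Ht)).
assert (exp ((d1 - l0) * t) <= exp (d1 - l0)) by (apply exp_le_exp; nra).
assert (0 <= a / k * t) by (apply Rmult_le_pos; [apply Rdiv_le_0_compat |]; lra).
nra.
Qed.

Lemma inv_y1_one_le : / y1 1 <= exp (d1 - l0) / (y1 0 + a / k).
Proof.
assert (0 <= a / k) by (apply Rdiv_le_0_compat; lra).
apply Rinv_le_of_le_mul; [lra | apply exp_pos |].
pose proof (y1_lower_bound 1 Rle_0_1) as Hlow. rewrite !Rmult_1_r in Hlow. exact Hlow.
Qed.

(* By (A5), [y1] is a supersolution of a logistic equation harvested by [y0]; the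
   primitive of [y0] from 1 is [(y0 s - y0 1) / l0], bounded by [/ (k * - l0)]. *)
Lemma inv_y1_le_after_one (l1 : R) : 0 < l1 ->
  (forall x y, 0 <= x -> 0 <= y -> l1 * (1 - (x + y)) + d1 <= f x y) ->
  forall t, 1 <= t -> / y1 t <= exp (l1 / (k * - l0)) * (1 + exp (- l1 * (t - 1)) / y1 1).
Proof.
intros Hl1 Hlow.
assert (Hy0_le : forall s, 1 <= s -> y0 s <= y0 1).
{ intros s Hs. rewrite !y0_eq by lra. apply Rmult_le_compat_l.
  - left; apply Rinv_0_lt_compat, k_gt0.
  - apply exp_le_exp. nra. }
set (dy1 := fun s => (f (y0 s) (y1 s) - d1) * y1 s + a * y0 s).
apply (inv_le_of_logistic_supersolution y1 dy1 y0 (fun s => / l0 * (y0 s - y0 1)));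
  [exact Hl1 | | | | | | ].
- intros s Hs. apply y1_derive. lra.
- intros s Hs. replace (y0 s) with (/ l0 * (l0 * y0 s - 0)) by (field; lra).
  apply is_derive_scal, (@is_derive_minus R_AbsRing R_NormedModule y0 (fun _ => y0 1)).
  + apply y0_derive. lra.
  + apply (@is_derive_const R_AbsRing R_NormedModule).
- intros s Hs. apply y1_pos. lra.
- intros s Hs. unfold dy1.
  pose proof (y1_pos s ltac:(lra)). pose proof (y0_nonneg s ltac:(lra)).
  pose proof (Hlow (y0 s) (y1 s) ltac:(assumption) ltac:(lra)).
  assert (0 <= a * y0 s) by (apply Rmult_le_pos; assumption).
  nra.
- rewrite Rminus_diag. apply Rmult_0_r.
- intros s Hs. pose proof (Hy0_le s Hs). pose proof (y0_nonneg s ltac:(lra)).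
  assert (Hy01 : y0 1 <= / k).
  { rewrite y0_eq, Rmult_1_r by lra. rewrite <- (Rmult_1_r (/ k)) at 2.
    apply Rmult_le_compat_l; [left; apply Rinv_0_lt_compat, k_gt0 |].
    rewrite <- exp_0. apply exp_le_exp. lra. }
  replace (/ l0 * (y0 s - y0 1)) with ((y0 1 - y0 s) * / - l0) by (field; lra).
  replace (/ (k * - l0)) with (/ k * / - l0) by (field; lra).
  assert (0 < / - l0) by (apply Rinv_0_lt_compat; lra).
  split; [apply Rmult_le_pos | apply Rmult_le_compat_r]; lra.
Qed.

Lemma inv_y1_le_exp_decay (l1 : R) : 0 < l1 ->
  (forall x y, 0 <= x -> 0 <= y -> l1 * (1 - (x + y)) + d1 <= f x y) ->
  forall t, 1 <= t ->
  / y1 t <= exp (l1 / (k * - l0))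
            + exp (l1 / (k * - l0)) * exp l1 * (exp (d1 - l0) / (y1 0 + a / k)) * exp (- l1 * t).
Proof.
intros Hl1 Hlow t Ht.
eapply Rle_trans; [apply (inv_y1_le_after_one l1 Hl1 Hlow t Ht) |].
replace (exp (- l1 * (t - 1))) with (exp l1 * exp (- l1 * t)) by (rewrite <- exp_plus; f_equal; ring).
pose proof inv_y1_one_le. pose proof (exp_pos l1). pose proof (exp_pos (- l1 * t)).
pose proof (exp_pos (l1 / (k * - l0))).
replace (exp (l1 / (k * - l0)) * (1 + exp l1 * exp (- l1 * t) / y1 1))
  with (exp (l1 / (k * - l0)) + exp (l1 / (k * - l0)) * exp l1 * / y1 1 * exp (- l1 * t))
  by (unfold Rdiv; ring).
apply Rplus_le_compat_l, Rmult_le_compat_r; [lra |].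
apply Rmult_le_compat_l; [nra | assumption].
Qed.

End LogisticSolution.

Theorem mainTheorem4 (r0 d0 d1 k alpha beta : R) (f : R -> R -> R) :
  0 <= r0 -> 0 <= d0 -> r0 - d0 < 0 -> 0 < d1 -> 1 < k ->
  0 < alpha < 1 -> 0 < beta < 1 ->
  f_assumptions f d1 ->
  exists c1 c2 c3 : R, 0 < c1 /\ 0 < c2 /\ 0 < c3 /\
  exists N : nat, forall n : nat, (N <= n)%nat ->
  forall y0 y1 yb : R -> R,
    is_solution f (r0 - d0) d1 k alpha beta n y0 y1 yb ->
    forall t : R,
      (0 <= t <= 1 -> / y1 t <= c1 * Rpower (INR n) (1 - beta)) /\
      (1 < t -> / y1 t <= c2 + c3 * Rpower (INR n) (Rmin (1 - beta) alpha)
                                * exp (- (f 0 0 - d1) * t)).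
Proof.
intros _ _ Hl0 Hd1 Hk _ _ [Hf0 [_ [_ [_ [Hr1 [_ [_ [_ HA5]]]]]]]].
set (l0 := r0 - d0) in *. set (l1 := f 0 0 - d1).
set (c := exp (l1 / (k * - l0))).
exists (k * exp (d1 - l0)), c, (c * exp l1 * k * exp (d1 - l0)).
assert (Hc : 0 < c) by apply exp_pos. pose proof (exp_pos l1). pose proof (exp_pos (d1 - l0)).
split; [nra | split; [exact Hc | split; [repeat apply Rmult_lt_0_compat; lra |]]].
exists 1%nat. intros n Hn y0 y1 yb [Hy00 [Hy10 [_ [Hlim0 [Hlim1 [_ Hder]]]]]] t.
assert (HnR : 0 < INR n) by (apply lt_0_INR; lia).
set (a := Rpower (INR n) (- alpha)) in *.
assert (Hy0 : forall s, 0 < s -> y0 s = / k * exp (l0 * s)).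
{ apply linear_ode_solution_at_right; [apply Hder |].
  replace (/ k) with (y0 0) by (rewrite Hy00; field; lra). exact Hlim0. }
rewrite Rpower_div_mul_self in Hy10 by lra.
assert (Hy10p : 0 < y1 0)
  by (rewrite Hy10; apply Rmult_lt_0_compat; apply Rinv_0_lt_compat; [lra | apply exp_pos]).
pose proof (inv_y1_le_on_unit_interval f d1 l0 k a y0 y1 Hf0 (Rlt_le _ _ Hd1) Hl0
  ltac:(lra) (Rlt_le _ _ (exp_pos _)) Hy0 Hy10p Hlim1 ltac:(apply Hder)) as Hunit.
pose proof (inv_y1_le_exp_decay f d1 l0 k a y0 y1 Hf0 (Rlt_le _ _ Hd1) Hl0
  ltac:(lra) (Rlt_le _ _ (exp_pos _)) Hy0 ltac:(apply Hder) Hy10p Hlim1 ltac:(apply Hder) l1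
  ltac:(unfold l1; lra) ltac:(intros x y Hx Hy; apply Rge_le, HA5; assumption)) as Hdecay.
split; intros Ht.
- eapply Rle_trans; [apply Hunit, Ht |].
  rewrite Hy10; unfold Rdiv; rewrite Rinv_mult, !Rinv_inv. right. ring.
- eapply Rle_trans; [apply Hdecay; lra |]. fold c.
  apply Rplus_le_compat_l, Rmult_le_compat_r; [left; apply exp_pos |].
  replace (c * exp l1 * k * exp (d1 - l0) * Rpower (INR n) (Rmin (1 - beta) alpha))
    with (c * exp l1 * (exp (d1 - l0) * (k * Rpower (INR n) (Rmin (1 - beta) alpha)))) by ring.
  apply Rmult_le_compat_l; [nra |]. apply Rmult_le_compat_l; [lra |].
  rewrite Hy10. apply inv_initial_plus_source_le. lra.
Qed.
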